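(* Let $X,Y$ be infinite dimensional Banach lattices such that (a) $X,Y$ are relatively $s$-decomposable for some $1\le s\le\infty$; (b) $\ell_p$ is finitely lattice representable in $Y_U$; (c) $\ell_q$ is finitely lattice representable in $X_L$. Then $\frac1p\le\frac1q+\frac1s$.
   Context: Banach lattices are real; disjoint means $|x|\wedge|y|=0$. $X,Y$ are relatively $s$-decomposable if there is $D$ with $\|\sum_{i=1}^n y_i\|_Y\le D(\sum_i(\|y_i\|_Y/\|x_i\|_X)^s)^{1/s}\|\sum_{i=1}^n x_i\|_X$ for all $n$ and all pairwise disjoint nonzero $x_i\in X$, pairwise disjoint nonzero $y_i\in Y$ (max for $s=\infty$). $\ell_r$ is finitely lattice representable in a Banach lattice $Z$ if for every $n$ and $\varepsilon>0$ there are pairwise disjoint $z_1,\dots,z_n\in Z$ with $\|a\|_{\ell_r^n}\le\|\sum a_iz_i\|_Z\le(1+\varepsilon)\|a\|_{\ell_r^n}$ for all $a\in\mathbb R^n$. $\mathfrak B_n(X)$ is the set of $n$-tuples of pairwise disjoint norm-one elements. For $a\in\mathbb R^n$: $\|a\|_{Y_U(n)}:=\sup\{\|\sum a_iy_i\|_Y:(y_i)\in\mathfrak B_n(Y)\}$; $\Phi_n(a):=\inf\{\|\sum a_ix_i\|_X:(x_i)\in\mathfrak B_n(X)\}$; $\|a\|_{X_L(n)}:=\inf\{\sum_{k\in F}\Phi_n(a^k):F\text{ finite}, a=\sum_{k\in F}a^k\}$. $Y_U$, $X_L$ are the Banach lattices (coordinate-wise order) of real sequences with $\|a\|_{Y_U}:=\sup_n\|(a_i)_{i\le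 n}\|_{Y_U(n)}<\infty$, resp. $\|a\|_{X_L}:=\sup_n\|(a_i)_{i\le n}\|_{X_L(n)}<\infty$. *)

From HB Require Import structures.
From mathcomp Require Import all_boot all_order all_algebra.
From mathcomp Require Import all_classical all_reals all_analysis.
Set Implicit Arguments. Unset Strict Implicit. Unset Printing Implicit Defensive.
Import Order.TTheory GRing.Theory Num.Theory.
Import numFieldNormedType.Exports.
Local Open Scope classical_set_scope.
Local Open Scope ring_scope.

Section BanachLattices.
Variable R : realType.

Record banach_lattice (V : completeNormedModType R)
    (le : V -> V -> Prop) (vjoin : V -> V -> V) : Prop := {
  bl_refl : forall x, le x x;
  bl_antisym : forall x y, le x y -> le y x -> x = y;
  bl_trans : forall x y z, le x y -> le y z -> le x z;
  bl_add : forall x y z, le x y -> le (x + z) (y + z);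
  bl_scale : forall (a : R) x y, 0 <= a -> le x y -> le (a *: x) (a *: y);
  bl_join_ubl : forall x y, le x (vjoin x y);
  bl_join_ubr : forall x y, le y (vjoin x y);
  bl_join_least : forall x y z, le x z -> le y z -> le (vjoin x y) z;
  bl_norm : forall x y, le (vjoin x (- x)) (vjoin y (- y)) -> `|x| <= `|y|
}.

Definition infinite_dim (V : completeNormedModType R) : Prop :=
  forall n : nat, exists v : 'I_n -> V,
    forall c : 'I_n -> R, \sum_(i < n) c i *: v i = 0 -> forall i, c i = 0.

Section Lat.
Variable V : completeNormedModType R.
Variable vjoin : V -> V -> V.

Definition vabs (x : V) : V := vjoin x (- x).
Definition vmeet (x y : V) : V := - vjoin (- x) (- y).
Definition ldisjoint (x y : V) : Prop := vmeet (vabs x) (vabs y) = 0.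
Definition pairwise_disjoint n (x : 'I_n -> V) : Prop :=
  forall i j, i != j -> ldisjoint (x i) (x j).
Definition Bn n : set ('I_n -> V) :=
  [set x | pairwise_disjoint x /\ forall i, `|x i| = 1].

Definition U_n_norm n (a : 'I_n -> R) : \bar R :=
  ereal_sup [set (`|\sum_(i < n) a i *: y i|)%:E | y in @Bn n].
Definition Phi_n n (a : 'I_n -> R) : \bar R :=
  ereal_inf [set (`|\sum_(i < n) a i *: x i|)%:E | x in @Bn n].
Definition L_n_norm n (a : 'I_n -> R) : \bar R :=
  ereal_inf [set t | exists (m : nat) (F : 'I_m -> 'I_n -> R),
    (forall i, a i = \sum_(k < m) F k i) /\ t = (\sum_(k < m) Phi_n (F k))%E].
(* norms of V_U and V_L on real sequences (finite iff the sequence is in the space) *)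
Definition U_norm (a : nat -> R) : \bar R :=
  ereal_sup [set U_n_norm (fun i : 'I_n => a (nat_of_ord i)) | n in [set: nat]].
Definition L_norm (a : nat -> R) : \bar R :=
  ereal_sup [set L_n_norm (fun i : 'I_n => a (nat_of_ord i)) | n in [set: nat]].
End Lat.

Definition lsnorm (r : \bar R) n (a : 'I_n -> R) : R :=
  match r with
  | r'%:E => (\sum_(i < n) `|a i| `^ r') `^ (r'^-1)
  | +oo%E => \big[Num.max/0]_(i < n) `|a i|
  | -oo%E => 0
  end.

Definition einv (r : \bar R) : R :=
  match r with r'%:E => r'^-1 | _ => 0 end.

Definition rel_decomposable (X Y : completeNormedModType R)
    (joinX : X -> X -> X) (joinY : Y -> Y -> Y) (s : \bar R) : Prop :=
  exists D : R, forall n (x : 'I_n -> X) (y : 'I_n -> Y),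
    pairwise_disjoint joinX x -> (forall i, x i != 0) ->
    pairwise_disjoint joinY y -> (forall i, y i != 0) ->
    `|\sum_(i < n) y i| <=
      D * lsnorm s (fun i => `|y i| / `|x i|) * `|\sum_(i < n) x i|.

(* disjointness in the coordinatewise-ordered lattice of real sequences *)
Definition seq_disjoint (z w : nat -> R) : Prop :=
  forall k, Num.min `|z k| `|w k| = 0.

(* ell_r is finitely lattice representable in the sequence lattice with norm N
   (whose elements are the sequences of finite N-norm) *)
Definition fin_lat_rep (r : \bar R) (N : (nat -> R) -> \bar R) : Prop :=
  forall (n : nat) (eps : R), 0 < eps ->
  exists z : 'I_n -> nat -> R,
    (forall i, (N (z i) < +oo)%E) /\
    (forall i j, i != j -> seq_disjoint (z i) (z j)) /\
    forall a : 'I_n -> R,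
      ((lsnorm r a)%:E <= N (fun k => (\sum_(i < n) a i * z i k)%R))%E /\
      (N (fun k => (\sum_(i < n) a i * z i k)%R) <= ((1 + eps) * lsnorm r a)%:E)%E.

End BanachLattices.

From Pilot Require Import Defs.
From HB Require Import structures.
From mathcomp Require Import all_boot all_order all_algebra.
From mathcomp Require Import all_classical all_reals all_analysis.
From mathcomp Require Import lra ring.
Import Order.TTheory GRing.Theory Num.Theory.
Import numFieldNormedType.Exports.
Set Implicit Arguments. Unset Strict Implicit. Unset Printing Implicit Defensive.
Local Open Scope ring_scope.

(* For every n, finite representability of ell_p in Y_U provides pairwise disjoint
   u_1, ..., u_n in Y with ||u_i|| <= 2 and ||u_1 + ... + u_n|| > n^(1/p) / 2. That of ell_q
   in X_L provides disjoint sequences w_1, ..., w_n with ||w_i|| >= 1 and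
   ||w_1 + ... + w_n|| <= 2 n^(1/q) in X_L; grouping the terms of a near-optimal
   decomposition of w_1 + ... + w_n (in the definition of the X_L-norm) according to the
   supports of the w_i gives disjoint families (x^k_i)_i, k < K, with
   c_i := sum_k ||x^k_i|| > 1/2 and sum_k ||x^k_1 + ... + x^k_n|| <= 4 n^(1/q).
   Writing u_i = sum_k (||x^k_i|| / c_i) u_i and applying relative s-decomposability to
   each k gives n^(1/p) / 2 <= 16 |D| n^(1/s) n^(1/q); letting n grow, 1/p <= 1/q + 1/s. *)

Section VectorLattice.
Variables (R : realType) (V : completeNormedModType R).
Variables (le : V -> V -> Prop) (vjoin : V -> V -> V).
Hypothesis HV : banach_lattice le vjoin.

Local Notation vabs := (vabs vjoin).
Local Notation ldisjoint := (ldisjoint vjoin).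

Let vle_refl x : le x x := bl_refl HV x.
Let vle_trans {x y z} : le x y -> le y z -> le x z := @bl_trans _ _ _ _ HV x y z.
Let vle_anti {x y} : le x y -> le y x -> x = y := @bl_antisym _ _ _ _ HV x y.
Let vle_addr {x y} z : le x y -> le (x + z) (y + z) := @bl_add _ _ _ _ HV x y z.
Let vle_scale {a : R} {x y} : 0 <= a -> le x y -> le (a *: x) (a *: y) :=
  @bl_scale _ _ _ _ HV a x y.
Let vjoin_ubl x y : le x (vjoin x y) := bl_join_ubl HV x y.
Let vjoin_ubr x y : le y (vjoin x y) := bl_join_ubr HV x y.
Let vjoin_least {x y z} : le x z -> le y z -> le (vjoin x y) z :=
  @bl_join_least _ _ _ _ HV x y z.

Lemma vle_addLR u w v : le (u + w) v <-> le u (v - w).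
Proof.
split=> h; first by have := vle_addr (- w) h; rewrite addrK.
by have := vle_addr w h; rewrite subrK.
Qed.

Lemma vle_subLR u w v : le (u - w) v -> le u (v + w).
Proof. by move/vle_addLR; rewrite opprK. Qed.

Lemma vle_add a b c d : le a b -> le c d -> le (a + c) (b + d).
Proof.
move=> hab hcd; apply: (vle_trans (vle_addr c hab)).
by rewrite ![b + _]addrC; apply: vle_addr.
Qed.

Lemma vle_opp a b : le a b -> le (- b) (- a).
Proof.
move=> h; have := vle_addr (- a - b) h.
by rewrite addrA subrr add0r addrCA subrr addr0.
Qed.

Lemma vjoinC a b : vjoin a b = vjoin b a.
Proof. by apply: vle_anti; apply: vjoin_least. Qed.

Lemma vabsN x : vabs (- x) = vabs x.
Proof. by rewrite /vabs opprK vjoinC. Qed.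

Lemma vabs_ge0 x : le 0 (vabs x).
Proof.
have h : le (x - x) (vabs x + vabs x) := vle_add (vjoin_ubl _ _) (vjoin_ubr _ _).
rewrite subrr in h.
have -> : vabs x = 2^-1 *: (vabs x + vabs x).
  by rewrite -[in RHS](scale1r (vabs x)) -scalerDl scalerA mulVf ?pnatr_eq0 // scale1r.
by rewrite -(scaler0 _ 2^-1); apply: vle_scale h; rewrite invr_ge0 ler0n.
Qed.

Lemma vopp_le0 a : le 0 a -> le (- a) 0.
Proof. by move/vle_opp; rewrite oppr0. Qed.

Lemma vabs_triangle x y : le (vabs (x + y)) (vabs x + vabs y).
Proof.
apply: vjoin_least; first exact: vle_add (vjoin_ubl _ _) (vjoin_ubl _ _).
by rewrite opprD; exact: vle_add (vjoin_ubr _ _) (vjoin_ubr _ _).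
Qed.

Lemma vabsZ_le a x : le (vabs (a *: x)) (`|a| *: vabs x).
Proof.
have [a0|a0] := leP 0 a.
  rewrite ger0_norm //; apply: vjoin_least; first exact: vle_scale (vjoin_ubl _ _).
  by rewrite -scalerN; exact: vle_scale (vjoin_ubr _ _).
have Na0 : 0 <= - a by rewrite oppr_ge0 ltW.
rewrite ltr0_norm //; apply: vjoin_least; last by rewrite -scaleNr; exact: vle_scale (vjoin_ubl _ _).
by rewrite -[a *: x]opprK -scalerN -scaleNr; exact: vle_scale (vjoin_ubr _ _).
Qed.

Lemma vabs0 : vabs 0 = 0.
Proof. by rewrite /vabs oppr0; apply: vle_anti; [apply: vjoin_least|]. Qed.

Lemma ldisjointE x y : ldisjoint x y <-> vjoin (- vabs x) (- vabs y) = 0.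
Proof.
rewrite /Defs.ldisjoint /vmeet.
by split=> [/eqP|->]; [rewrite oppr_eq0 => /eqP|rewrite oppr0].
Qed.

Lemma ldisjoint_sym x y : ldisjoint x y -> ldisjoint y x.
Proof. by rewrite !ldisjointE vjoinC. Qed.

Lemma ldisjoint0 y : ldisjoint 0 y.
Proof.
apply/ldisjointE; rewrite vabs0 oppr0; apply: vle_anti => //.
by apply: vjoin_least => //; exact: vopp_le0 (vabs_ge0 _).
Qed.

Lemma ldisjointD x y z : ldisjoint x y -> ldisjoint x z -> ldisjoint x (y + z).
Proof.
move=> /ldisjointE hy /ldisjointE hz; apply/ldisjointE.
set a := vabs x; set J := vjoin _ _.
have Ja : le (- a) J by exact: vjoin_ubl.
have below_J u : le 0 u -> le (- a - u) J.
  move=> u0; apply: vle_trans Ja; rewrite -{2}[- a]addr0.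
  by apply: vle_add => //; exact: vopp_le0.
apply: vle_anti; first by apply: vjoin_least; exact: vopp_le0 (vabs_ge0 _).
(* 0 = (-|x| v -|y|) + (-|x| v -|z|), and each of the four sums is below J *)
have -> : (0 : V) = vjoin (- a) (- vabs y) + vjoin (- a) (- vabs z) by rewrite hy hz addr0.
apply/vle_addLR; apply: vjoin_least; apply/vle_addLR; rewrite addrC; apply/vle_addLR;
  apply: vjoin_least; apply: vle_subLR; rewrite opprK.
- exact/below_J/vabs_ge0.
- by rewrite addrC; exact/below_J/vabs_ge0.
- exact/below_J/vabs_ge0.
- rewrite addrC -opprD; apply: vle_trans (vjoin_ubr _ _).
  exact/vle_opp/vabs_triangle.
Qed.

Lemma ldisjointZl k x y : ldisjoint x y -> ldisjoint (k *: x) y.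
Proof.
move=> /ldisjointE h; apply/ldisjointE.
set J := vjoin _ _; set mu := `|k| + 1.
have mu1 : 1 <= mu by rewrite lerDr.
have mu0 : 0 < mu by apply: lt_le_trans mu1.
have muV0 : 0 <= mu^-1 by rewrite invr_ge0 ltW.
apply: vle_anti; first by apply: vjoin_least; exact: vopp_le0 (vabs_ge0 _).
(* 0 = -|x| v -|y| lies below J / mu, since |kx| <= mu |x| and mu >= 1 *)
have hJ : le 0 (mu^-1 *: J).
  rewrite -h; apply: vjoin_least.
  - have : le (- (mu *: vabs x)) J.
      apply: vle_trans (vjoin_ubl _ _); apply: vle_opp; apply: vle_trans (vabsZ_le k x) _.
      rewrite /mu scalerDl scale1r -{1}[_ *: vabs x]addr0.
      exact: vle_add (vle_refl _) (vabs_ge0 x).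
    move/(vle_scale muV0); rewrite scalerN scalerA mulVf ?gt_eqF // scale1r; apply.
  - apply: (@vle_trans _ (mu^-1 *: - vabs y)); last exact: vle_scale (vjoin_ubr _ _).
    rewrite -[X in le X _]add0r; apply/vle_addLR.
    rewrite opprK scalerN addrC -[X in X - _]scale1r -scalerBl.
    have muV1 : 0 <= 1 - mu^-1 by rewrite subr_ge0 invf_le1.
    by have := vle_scale muV1 (vabs_ge0 y); rewrite scaler0.
have := vle_scale (ltW mu0) hJ.
by rewrite scaler0 scalerA divff ?gt_eqF // scale1r.
Qed.

Lemma ldisjointZ a b x y : ldisjoint x y -> ldisjoint (a *: x) (b *: y).
Proof. by move=> h; apply/ldisjointZl/ldisjoint_sym/ldisjointZl/ldisjoint_sym. Qed.

Lemma ldisjoint_sum (I J : Type) (r : seq I) (r' : seq J) (P : pred I) (P' : pred J)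
    (f : I -> V) (g : J -> V) :
  (forall i j, P i -> P' j -> ldisjoint (f i) (g j)) ->
  ldisjoint (\sum_(i <- r | P i) f i) (\sum_(j <- r' | P' j) g j).
Proof.
have sum_closed (K : Type) (s : seq K) (Q : pred K) (h : K -> V) z :
    (forall k, Q k -> ldisjoint z (h k)) -> ldisjoint z (\sum_(k <- s | Q k) h k).
  by move=> hk; apply: big_ind => //; [exact/ldisjoint_sym/ldisjoint0|exact: ldisjointD].
move=> hfg; apply: ldisjoint_sym; apply: (sum_closed) => j P'j.
by apply: ldisjoint_sym; apply: sum_closed => i Pi; exact: hfg.
Qed.

Lemma ldisjoint_norm_leD x y : ldisjoint x y -> `|x| <= `|x + y|.
Proof.
move=> /ldisjointE h; apply: (bl_norm HV); change (le (vabs x) (vabs (x + y))).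
have -> : vabs x = vjoin (- vabs x) (- vabs y) + vabs x by rewrite h add0r.
apply/vle_addLR; apply: vjoin_least.
  by apply: (@vle_subLR _ (- vabs x)); rewrite opprK addNr; exact: vabs_ge0.
apply: (@vle_subLR _ (- vabs x)); rewrite opprK addrC; apply/vle_addLR; rewrite opprK.
by have := vabs_triangle (x + y) (- y); rewrite addrK vabsN.
Qed.

End VectorLattice.

Section SequenceNorms.
Variables (R : realType) (V : completeNormedModType R) (vjoin : V -> V -> V).

Lemma Phi_n_ge0 n (a : 'I_n -> R) : (0 <= Phi_n vjoin a)%E.
Proof. by apply/ereal_infP => _ [x _ <-]; rewrite lee_fin. Qed.

Lemma Phi_n_le n (a : 'I_n -> R) x : Bn vjoin x ->
  (Phi_n vjoin a <= (`|\sum_i a i *: x i|)%:E)%E.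
Proof. by move=> hx; apply: ereal_inf_lbound; exists x. Qed.

Lemma U_n_norm_ge n (a : 'I_n -> R) y : Bn vjoin y ->
  ((`|\sum_i a i *: y i|)%:E <= U_n_norm vjoin a)%E.
Proof. by move=> hy; apply: ereal_sup_ubound; exists y. Qed.

Lemma U_n_norm_le_U_norm (a : nat -> R) n :
  (U_n_norm vjoin (fun i : 'I_n => a i) <= U_norm vjoin a)%E.
Proof. by apply: ereal_sup_ubound; exists n. Qed.

Lemma L_n_norm_le_L_norm (a : nat -> R) n :
  (L_n_norm vjoin (fun i : 'I_n => a i) <= L_norm vjoin a)%E.
Proof. by apply: ereal_sup_ubound; exists n. Qed.

Lemma L_n_norm_le_sum_Phi_n n (a : 'I_n -> R) m (F : 'I_m -> 'I_n -> R) :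
  (forall i, a i = \sum_(k < m) F k i) ->
  (L_n_norm vjoin a <= \sum_(k < m) Phi_n vjoin (F k))%E.
Proof. by move=> h; apply: ereal_inf_lbound; exists m, F. Qed.

Variable le : V -> V -> Prop.
Hypothesis HV : banach_lattice le vjoin.

Lemma Phi_n_widen m M (hmM : (m <= M)%N) (a : 'I_M -> R) :
  (Phi_n vjoin (fun i : 'I_m => a (widen_ord hmM i)) <= Phi_n vjoin a)%E.
Proof.
apply/ereal_infP => _ [x [xdisj xnorm] <-].
have hx : Bn vjoin (fun i : 'I_m => x (widen_ord hmM i)).
  split=> [i j ij|i]; last exact: xnorm.
  by apply: xdisj; apply: contra ij => /eqP [] hij; apply/eqP/val_inj.
apply: le_trans (Phi_n_le _ hx) _; rewrite lee_fin.
rewrite (bigID (fun j : 'I_M => (j < m)%N)) /=.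
rewrite -(big_ord_narrow (F := fun j => a j *: x j) hmM).
apply: (ldisjoint_norm_leD HV); apply: (ldisjoint_sum HV) => i j hi hj.
by apply: (ldisjointZ HV); apply: xdisj; apply: contraNneq hj => <-.
Qed.

Lemma L_n_norm_widen m M (hmM : (m <= M)%N) (b : nat -> R) :
  (L_n_norm vjoin (fun i : 'I_m => b i) <= L_n_norm vjoin (fun i : 'I_M => b i))%E.
Proof.
apply/ereal_infP => _ [K [F [hF ->]]].
apply: le_trans (L_n_norm_le_sum_Phi_n (F := fun k i => F k (widen_ord hmM i)) _) _.
  by move=> i; exact: (hF (widen_ord hmM i)).
by apply: lee_sum => k _; exact: Phi_n_widen.
Qed.

Lemma L_norm_truncations_gt (t : R) n (w : 'I_n -> nat -> R) :
  (forall i, t%:E < L_norm vjoin (w i))%E ->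
  exists M, forall i, (t%:E < L_n_norm vjoin (fun j : 'I_M => w i j))%E.
Proof.
move=> hw.
have hM i : exists M, (t%:E < L_n_norm vjoin (fun j : 'I_M => w i j))%E.
  by have /ereal_sup_gt [_ [M _ <-] hM] := hw i; exists M.
have [Mi hMi] := fin_all_exists hM.
exists (\max_(i < n) Mi i)%N => i.
exact: lt_le_trans (hMi i) (L_n_norm_widen (leq_bigmax i) (w i)).
Qed.

Lemma L_n_norm_lt_approx M (a : 'I_M -> R) (t eps : R) : 0 < eps ->
  (L_n_norm vjoin a < t%:E)%E ->
  exists K (F : 'I_K -> 'I_M -> R) (x : 'I_K -> 'I_M -> V),
    [/\ forall j, a j = \sum_k F k j, forall k, Bn vjoin (x k)
      & \sum_k `|\sum_j F k j *: x k j| < t + eps].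
Proof.
move=> eps0 /ereal_inf_lt [_ [K [F [hF ->]]] hsum].
have Phi_fin k : Phi_n vjoin (F k) \is a fin_num.
  rewrite ge0_fin_numE ?Phi_n_ge0 //; apply: le_lt_trans _ (lt_trans hsum (ltry _)).
  by rewrite (bigD1 k) //= leeDl // sume_ge0 // => k' _; exact: Phi_n_ge0.
pose phi k := fine (Phi_n vjoin (F k)).
have phiE k : Phi_n vjoin (F k) = (phi k)%:E by rewrite /phi fineK.
have sum_phi : \sum_k phi k < t.
  by move: hsum; rewrite (eq_bigr _ (fun k _ => phiE k)) sumEFin lte_fin.
pose eta := eps / K.+1%:R.
have eta0 : 0 < eta by rewrite divr_gt0 ?ltr0n.
have hx k : exists x, Bn vjoin x /\ `|\sum_j F k j *: x j| < phi k + eta.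
  have : (Phi_n vjoin (F k) < (phi k + eta)%:E)%E by rewrite phiE lte_fin ltrDl.
  by case/ereal_inf_lt => _ [x hx <-]; rewrite lte_fin; exists x.
have [x hxk] := fin_all_exists hx.
exists K, F, x; split=> // [k|]; first exact: (hxk k).1.
apply: le_lt_trans (ler_sum _ (fun k _ => ltW (hxk k).2)) _.
rewrite big_split /= sumr_const card_ord -mulr_natl.
have : K%:R * eta <= eps.
  by rewrite /eta mulrA ler_pdivrMr ?ltr0n // mulrC ler_pM2l // ler_nat.
lra.
Qed.

End SequenceNorms.

Section FiniteNorms.
Variable R : realType.

Lemma lsnorm_ge0 (r : \bar R) n (a : 'I_n -> R) : 0 <= lsnorm r a.
Proof.
case: r => [r||] //=; first exact: powR_ge0.
by apply: (big_ind (fun x => 0 <= x)) => // x y; rewrite le_max => ->.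
Qed.

Lemma lsnorm_const1 (r : \bar R) n : (1 <= r)%E ->
  lsnorm r (fun _ : 'I_n.+1 => 1 : R) = n.+1%:R `^ einv r.
Proof.
case: r => [r||] //= _; first by rewrite normr1 powR1 sumr_const card_ord.
rewrite powRr0; apply/le_anti/andP; split.
  by apply: bigmax_le => // j _; rewrite normr1.
by have := le_bigmax 0 (fun _ : 'I_n.+1 => `|1 : R|) ord0; rewrite normr1.
Qed.

Lemma lsnorm_delta (r : \bar R) n (i : 'I_n) : (1 <= r)%E ->
  lsnorm r (fun j : 'I_n => (j == i)%:R) = 1.
Proof.
case: r => [r||] //=; rewrite ?lee_fin => hr.
  have r0 : r != 0 by rewrite gt_eqF // (lt_le_trans ltr01).
  rewrite (bigD1 i) //= big1 => [|j /negbTE ->]; last by rewrite normr0 powR0.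
  by rewrite eqxx normr1 powR1 addr0 powR1.
apply/le_anti/andP; split.
  by apply: bigmax_le => // j _; rewrite ger0_norm ?ler0n // lern1 leq_b1.
by have := le_bigmax 0 (fun j : 'I_n => `|(j == i)%:R : R|) i; rewrite eqxx normr1.
Qed.

Lemma lsnorm_le (r : \bar R) m n (f : 'I_m -> R) B : (1 <= r)%E -> (m <= n)%N ->
  (0 < n)%N -> 0 <= B -> (forall t, 0 <= f t <= B) -> lsnorm r f <= B * n%:R `^ einv r.
Proof.
case: r => [r||] //=; rewrite ?lee_fin => hr hmn n0 B0 hf; last first.
  rewrite powRr0 mulr1; apply: bigmax_le => // j _.
  by case/andP: (hf j) => ? ?; rewrite ger0_norm.
have r0 : 0 < r by apply: lt_le_trans hr.
have sum_le : \sum_(t < m) `|f t| `^ r <= n%:R * B `^ r.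
  apply: (@le_trans _ _ (\sum_(t < m) B `^ r)).
    apply: ler_sum => t _; case/andP: (hf t) => f0 fB.
    by apply: ge0_ler_powR; rewrite ?nnegrE ?ger0_norm // ltW.
  rewrite sumr_const card_ord -[_ *+ m]mulr_natl.
  by apply: ler_wpM2r; [exact: powR_ge0|rewrite ler_nat].
apply: (@le_trans _ _ ((n%:R * B `^ r) `^ r^-1)).
  apply: ge0_ler_powR => //.
  - by rewrite invr_ge0 ltW.
  - by rewrite nnegrE; apply: sumr_ge0 => t _; exact: powR_ge0.
  - by rewrite nnegrE mulr_ge0 ?powR_ge0.
by rewrite powRM ?ler0n ?powR_ge0 // -powRrM divff ?gt_eqF // powRr1 // mulrC.
Qed.

Lemma seq_disjointP (z w : nat -> R) k : seq_disjoint z w -> z k = 0 \/ w k = 0.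
Proof.
move/(_ k); rewrite /Num.min; case: ltP => _ /eqP; rewrite normr_eq0 => /eqP; auto.
Qed.

(* g j is the only index i, if any, with w i j != 0 *)
Lemma seq_disjoint_support n (w : 'I_n.+1 -> nat -> R) :
    (forall i i', i != i' -> seq_disjoint (w i) (w i')) ->
  exists g : nat -> 'I_n.+1, forall j i, w i j = (\sum_i' w i' j) * (g j == i)%:R.
Proof.
move=> wdisj.
exists (fun j => if [pick i | w i j != 0] is Some i then i else ord0) => j i.
case: pickP => [i0 wi0 | /(_ _)/negbFE/eqP w0]; last by rewrite w0 big1 ?mul0r.
have others i' : i' != i0 -> w i' j = 0.
  move=> ne; case: (seq_disjointP j (wdisj _ _ ne)) => // wi0j.
  by move: wi0; rewrite wi0j eqxx.
rewrite (bigD1 i0) //= big1 ?addr0 => [|i' /others //].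
by case: eqVneq => [<-|ne]; rewrite ?mulr1 // mulr0 others // eq_sym.
Qed.

Lemma fin_lat_repP (r : \bar R) (N : (nat -> R) -> \bar R) : (1 <= r)%E ->
    fin_lat_rep r N -> forall n (eps : R), 0 < eps ->
  exists z : 'I_n.+1 -> nat -> R,
    [/\ forall i i', i != i' -> seq_disjoint (z i) (z i'),
        forall i, (1%:E <= N (z i) <= (1 + eps)%:E)%E
      & ((n.+1%:R `^ einv r)%:E <= N (fun k => (\sum_i z i k)%R)
          <= ((1 + eps) * n.+1%:R `^ einv r)%:E)%E].
Proof.
move=> hr rep n eps eps0; have [z [_ [zdisj hz]]] := rep n.+1 eps eps0.
exists z; split=> // [i|].
  have zi : (fun k => \sum_i' (i' == i)%:R * z i' k) = z i.
    apply: funext => k; rewrite (bigD1 i) //= eqxx mul1r big1 ?addr0 // => i' /negbTE ->.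
    by rewrite mul0r.
  by have [] := hz (fun j => (j == i)%:R); rewrite lsnorm_delta // mulr1 zi => -> ->.
have sumz : (fun k => \sum_i 1 * z i k) = (fun k => \sum_i z i k).
  by apply: funext => k; apply: eq_bigr => i _; rewrite mul1r.
by have [] := hz (fun _ => 1); rewrite lsnorm_const1 // sumz => -> ->.
Qed.

End FiniteNorms.

Section DisjointFamilies.
Variables (R : realType) (V : completeNormedModType R).
Variables (le : V -> V -> Prop) (vjoin : V -> V -> V).
Hypothesis HV : banach_lattice le vjoin.

Lemma pairwise_disjoint_combinations n M (c : 'I_n -> 'I_M -> R) (x : 'I_M -> V) :
    pairwise_disjoint vjoin x -> (forall i i' j, i != i' -> c i j = 0 \/ c i' j = 0) ->
  pairwise_disjoint vjoin (fun i => \sum_j c i j *: x j).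
Proof.
move=> xdisj hc i i' ii'; apply: (ldisjoint_sum HV) => j j' _ _.
have [<-|jj'] := eqVneq j j'; last exact/(ldisjointZ HV)/xdisj.
by case: (hc i i' j ii') => ->; rewrite scale0r; [|apply: (ldisjoint_sym HV)];
  exact: (ldisjoint0 HV).
Qed.

Lemma U_rep_disjoint_lower (p : \bar R) : (1 <= p)%E -> fin_lat_rep p (U_norm vjoin) ->
  forall n, exists u : 'I_n.+1 -> V,
    [/\ pairwise_disjoint vjoin u, forall i, `|u i| <= 2
      & n.+1%:R `^ einv p / 2 < `|\sum_i u i|].
Proof.
move=> hp rep n; have [z [zdisj zle /andP[hsum _]]] := fin_lat_repP hp rep n ltr01.
set c := n.+1%:R `^ einv p in hsum *.
have c0 : 0 < c by apply: powR_gt0; rewrite ltr0n.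
have : ((c / 2)%:E < U_norm vjoin (fun k => (\sum_i z i k)%R))%E.
  by apply: lt_le_trans hsum; rewrite lte_fin; lra.
case/ereal_sup_gt => _ [m _ <-] /ereal_sup_gt [_ [y hy <-]]; rewrite lte_fin => hy2.
exists (fun i => \sum_(j < m) z i j *: y j); split.
- apply: pairwise_disjoint_combinations hy.1 _ => i i' j ii'.
  exact: seq_disjointP (zdisj _ _ ii').
- move=> i; case/andP: (zle i) => _ zi2.
  have := le_trans (U_n_norm_ge (fun j : 'I_m => z i j) hy)
    (le_trans (U_n_norm_le_U_norm _ _ _) zi2).
  by rewrite lee_fin.
- rewrite exchange_big /=; under eq_bigr do rewrite -scaler_suml.
  exact: hy2.
Qed.

Lemma L_rep_disjoint_families (q : \bar R) : (1 <= q)%E -> fin_lat_rep q (L_norm vjoin) ->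
  forall n, exists K (v : 'I_K -> 'I_n.+1 -> V),
    [/\ forall k, pairwise_disjoint vjoin (v k),
        forall i, 2^-1 < \sum_k `|v k i|
      & \sum_k `|\sum_i v k i| <= 4 * n.+1%:R `^ einv q].
Proof.
move=> hq rep n; have [w [wdisj wge /andP[_ hsum]]] := fin_lat_repP hq rep n ltr01.
set c := n.+1%:R `^ einv q in hsum *.
have c1 : 1 <= c.
  rewrite -(powRr0 n.+1%:R); apply: ler_powR; rewrite ?ler1n //.
  by case: (q) hq => [r||] //=; rewrite lee_fin => hr; rewrite invr_ge0 (le_trans ler01).
have [M hM] : exists M, forall i, ((2^-1)%:E < L_n_norm vjoin (fun j : 'I_M => w i j))%E.
  apply: (L_norm_truncations_gt HV) => i; case/andP: (wge i) => hi _.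
  by apply: lt_le_trans hi; rewrite lte_fin; lra.
have hW : (L_n_norm vjoin (fun j : 'I_M => (\sum_i w i j)%R) < ((1 + 1) * c + 1)%:E)%E.
  apply: le_lt_trans (L_n_norm_le_L_norm _ (fun j => (\sum_i w i j)%R) M) _.
  apply: le_lt_trans hsum _.
  by rewrite lte_fin; lra.
have [K [F [x [hF hx hFx]]]] := L_n_norm_lt_approx ltr01 hW.
(* group the terms of the k-th decomposition according to the support of the w_i *)
have [g hg] := seq_disjoint_support wdisj.
pose v k i := \sum_(j < M) ((g j == i)%:R * F k j) *: x k j.
exists K, v; split.
- move=> k; apply: pairwise_disjoint_combinations (hx k).1 _ => i i' j ii'.
  by rewrite /=; case: eqP => [gi|_]; [right; rewrite gi (negbTE ii')|left]; rewrite mul0r.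
- move=> i; rewrite -lte_fin; apply: lt_le_trans (hM i) _.
  have wi_dec (j : 'I_M) : w i j = \sum_k (g j == i)%:R * F k j.
    by rewrite hg hF mulr_suml; apply: eq_bigr => k _; rewrite mulrC.
  apply: le_trans (L_n_norm_le_sum_Phi_n vjoin wi_dec) _.
  by rewrite -sumEFin; apply: lee_sum => k _; exact: Phi_n_le (hx k).
- have sum_v k : \sum_i v k i = \sum_j F k j *: x k j.
    rewrite exchange_big; apply: eq_bigr => j _ /=; rewrite -scaler_suml -mulr_suml.
    rewrite (bigD1 (g j)) //= eqxx /= mulr1n big1 ?addr0 ?mul1r // => i.
    by rewrite eq_sym => /negbTE ->.
  under eq_bigr do rewrite sum_v.
  by apply: le_trans (ltW hFx) _; lra.
Qed.

End DisjointFamilies.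

Section RelativeDecomposability.
Variables (R : realType) (X Y : completeNormedModType R).
Variables (leX : X -> X -> Prop) (joinX : X -> X -> X).
Variables (leY : Y -> Y -> Prop) (joinY : Y -> Y -> Y).
Hypotheses (HX : banach_lattice leX joinX) (HY : banach_lattice leY joinY).
Variables (s : \bar R) (D : R).
Hypothesis hs : (1 <= s)%E.
Hypothesis hD : forall n (x : 'I_n -> X) (y : 'I_n -> Y),
  pairwise_disjoint joinX x -> (forall i, x i != 0) ->
  pairwise_disjoint joinY y -> (forall i, y i != 0) ->
  `|\sum_(i < n) y i| <= D * lsnorm s (fun i => `|y i| / `|x i|) * `|\sum_(i < n) x i|.

Lemma rel_decomposable_weighted n (c : 'I_n -> R) (B : R) (x : 'I_n -> X) (u : 'I_n -> Y) :
    (0 < n)%N -> 0 <= B -> pairwise_disjoint joinX x -> pairwise_disjoint joinY u ->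
    (forall i, 0 < c i) -> (forall i, `|u i| <= B * c i) ->
  `|\sum_i (`|x i| / c i) *: u i| <= `|D| * (B * n%:R `^ einv s) * `|\sum_i x i|.
Proof.
move=> n0 B0 xdisj udisj c0 hu.
(* relative decomposability only applies to nonzero elements *)
pose A := [pred i | (x i != 0) && (u i != 0)].
have sum_yA : \sum_i (`|x i| / c i) *: u i = \sum_(i in A) (`|x i| / c i) *: u i.
  rewrite (bigID (mem A)) /= [X in _ + X]big1 ?addr0 // => i.
  rewrite inE negb_and !negbK => /orP[/eqP-> | /eqP->]; last by rewrite scaler0.
  by rewrite normr0 mul0r scale0r.
have sum_xA : `|\sum_(i in A) x i| <= `|\sum_i x i|.
  rewrite (bigID (mem A) xpredT) /=; apply: (ldisjoint_norm_leD HX).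
  by apply: (ldisjoint_sum HX) => i j hi hj; apply: xdisj; apply: contraNneq hj => <-.
rewrite sum_yA big_enum_val; rewrite big_enum_val in sum_xA.
pose x' (t : 'I_#|A|) := x (enum_val t); pose u' (t : 'I_#|A|) := u (enum_val t).
pose c' (t : 'I_#|A|) := c (enum_val t); pose y' t := (`|x' t| / c' t) *: u' t.
have x'0 t : x' t != 0 by have /andP[] := enum_valP t.
have u'0 t : u' t != 0 by have /andP[] := enum_valP t.
have y'0 t : y' t != 0.
  rewrite scaler_eq0 negb_or u'0 andbT mulf_neq0 // ?normr_eq0 //.
  by rewrite invr_eq0 gt_eqF //; apply: c0.
have x'disj : pairwise_disjoint joinX x'.
  by move=> t t' tt'; apply: xdisj; apply: contra tt' => /eqP/enum_val_inj ->.
have y'disj : pairwise_disjoint joinY y'.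
  move=> t t' tt'; apply: (ldisjointZ HY); apply: udisj.
  by apply: contra tt' => /eqP/enum_val_inj ->.
have ratio_le : lsnorm s (fun t => `|y' t| / `|x' t|) <= B * n%:R `^ einv s.
  apply: lsnorm_le => //; first by rewrite (leq_trans (max_card _)) ?card_ord.
  move=> t; have c'0 := c0 (enum_val t); have nx'0 : `|x' t| != 0 by rewrite normr_eq0.
  have -> : `|y' t| / `|x' t| = `|u' t| / c' t.
    rewrite /y' normrZ ger0_norm ?divr_ge0 ?ltW ?normr_gt0 ?x'0 //.
    by rewrite mulrAC [_ / c' t / _]mulrAC divff // mul1r mulrC.
  apply/andP; split; first by rewrite divr_ge0 // ltW.
  by rewrite ler_pdivrMr //; exact: hu.
have L0 := lsnorm_ge0 s (fun t => `|y' t| / `|x' t|).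
apply: le_trans (hD x'disj x'0 y'disj y'0) _.
apply: (@le_trans _ _ (`|D| * lsnorm s (fun t => `|y' t| / `|x' t|) * `|\sum_t x' t|)).
  by apply: ler_wpM2r => //; apply: ler_wpM2r => //; exact: ler_norm.
by apply: ler_pM => //; [apply: mulr_ge0 | apply: ler_wpM2l].
Qed.

Lemma rel_decomposable_families n K (B : R) (u : 'I_n -> Y) (v : 'I_K -> 'I_n -> X) :
    (0 < n)%N -> 0 <= B -> pairwise_disjoint joinY u ->
    (forall k, pairwise_disjoint joinX (v k)) ->
    (forall i, 0 < \sum_k `|v k i|) -> (forall i, `|u i| <= B * \sum_k `|v k i|) ->
  `|\sum_i u i| <= `|D| * (B * n%:R `^ einv s) * \sum_k `|\sum_i v k i|.
Proof.
move=> n0 B0 udisj vdisj c0 hu.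
have -> : \sum_i u i = \sum_k \sum_i (`|v k i| / \sum_k' `|v k' i|) *: u i.
  rewrite exchange_big; apply: eq_bigr => i _ /=.
  by rewrite -scaler_suml -mulr_suml divff ?scale1r // gt_eqF.
apply: le_trans (ler_norm_sum _ _ _) _; rewrite mulr_sumr; apply: ler_sum => k _.
exact: rel_decomposable_weighted.
Qed.

End RelativeDecomposability.

Lemma powR_exponent_le (R : realType) (a b C : R) :
  (forall N : nat, N.+1%:R `^ a <= C * N.+1%:R `^ b) -> a <= b.
Proof.
move=> h; rewrite leNgt; apply/negP => ba.
set d := a - b; have d0 : 0 < d by rewrite subr_gt0.
pose N := Num.truncn ((`|C| + 1) `^ d^-1); pose n : R := N.+1%:R.
have n0 : 0 < n by rewrite ltr0n.
have Cn : `|C| + 1 <= n `^ d.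
  have /ltW := truncnS_gt ((`|C| + 1) `^ d^-1).
  move/(ge0_ler_powR (ltW d0)); rewrite -powRrM mulVf ?gt_eqF // powRr1; last first.
    by rewrite addr_ge0.
  by apply; rewrite nnegrE ?powR_ge0 ?ltW.
have := h N; rewrite -/n -(subrK b a) -/d powRD; last by apply/implyP => _; rewrite gt_eqF.
have nb0 : 0 < n `^ b by rewrite powR_gt0.
have := ler_norm C; nra.
Qed.

Unset Implicit Arguments.

Theorem mainTheorem13 (R : realType) (X Y : completeNormedModType R)
  (leX : X -> X -> Prop) (joinX : X -> X -> X)
  (leY : Y -> Y -> Prop) (joinY : Y -> Y -> Y)
  (HX : banach_lattice leX joinX) (HY : banach_lattice leY joinY)
  (HXinf : infinite_dim X) (HYinf : infinite_dim Y)
  (s p q : \bar R) (hs : (1 <= s)%E) (hp : (1 <= p)%E) (hq : (1 <= q)%E) :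
  rel_decomposable joinX joinY s ->
  fin_lat_rep p (U_norm joinY) ->
  fin_lat_rep q (L_norm joinX) ->
  einv p <= einv q + einv s.
Proof.
move=> [D hD] /(U_rep_disjoint_lower HY hp) hY /(L_rep_disjoint_families HX hq) hX.
apply: (@powR_exponent_le _ _ _ (32 * `|D|)) => N.
have [u [udisj u_le sum_u]] := hY N; have [K [v [vdisj v_gt sum_v]]] := hX N.
have v_pos i : 0 < \sum_k `|v k i| by apply: lt_trans (v_gt i); rewrite invr_gt0.
have u_le4 i : `|u i| <= 4 * \sum_k `|v k i| by have := v_gt i; have := u_le i; lra.
have := rel_decomposable_families HX HY hs hD (ltn0Sn N) (ler0n _ 4) udisj vdisj v_pos u_le4.
set n : R := N.+1%:R in sum_u sum_v *; move=> sum_u_le.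
have DS0 : 0 <= `|D| * (4 * n `^ einv s) by rewrite mulr_ge0 ?mulr_ge0 ?powR_ge0.
have := ler_wpM2l DS0 sum_v.
rewrite powRD; last by apply/implyP => _; rewrite pnatr_eq0.
nra.
Qed.
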